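(* Let $\mathcal{M}$ be a matroid on $[n]$ and $\gamma$ a basic $\ell$-cover of $\mathcal{M}$. Then the focal complex $\mathcal{M}(\gamma)$ is (the independence complex of) a submatroid of $\mathcal{M}$, and $r(\mathcal{M}(\gamma))=r(\mathcal{M})$.
   Context: Matroids are identified with their independence complexes; $r$ denotes rank. For $\gamma:[n]\to\mathbb{N}_0$ and $S\subseteq[n]$, $\gamma(S)=\sum_{i\in S}\gamma(i)$. $\gamma$ is an $\ell$-cover of $\mathcal{M}$ if $\gamma(F)\ge\ell$ for every basis $F$ of $\mathcal{M}$, and basic if minimal among $\ell$-covers in the pointwise order. $\mathcal{M}(\gamma)$ is the simplicial complex generated by the bases $F$ of $\mathcal{M}$ with $\gamma(F)=\ell$. *)

(* Matroids on the ground set [n] = 'I_n, identified with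
   their independence complexes (a family of subsets of 'I_n). *)
From mathcomp Require Import all_boot all_order.
Set Implicit Arguments. Unset Strict Implicit. Unset Printing Implicit Defensive.

Definition is_matroid (n : nat) (I : {set {set 'I_n}}) : Prop :=
  [/\ set0 \in I,
      (forall A B : {set 'I_n}, B \in I -> A \subset B -> A \in I) &
      (forall A B : {set 'I_n}, A \in I -> B \in I -> #|A| < #|B| ->
         exists2 x, x \in B :\: A & x |: A \in I)].

Definition is_basis (n : nat) (I : {set {set 'I_n}}) (F : {set 'I_n}) : bool :=
  (F \in I) && [forall G in I, (F \subset G) ==> (G == F)].

Definition rank (n : nat) (I : {set {set 'I_n}}) : nat := \max_(A in I) #|A|.

Definition gsum (n : nat) (g : {ffun 'I_n -> nat}) (S : {set 'I_n}) : nat :=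
  \sum_(i in S) g i.

Definition is_cover (n : nat) (M : {set {set 'I_n}}) (g : {ffun 'I_n -> nat}) (l : nat) : Prop :=
  forall F : {set 'I_n}, is_basis M F -> l <= gsum g F.

Definition is_basic_cover (n : nat) (M : {set {set 'I_n}}) (g : {ffun 'I_n -> nat}) (l : nat) : Prop :=
  is_cover M g l /\
  (forall g' : {ffun 'I_n -> nat}, (forall i, g' i <= g i) -> is_cover M g' l -> g' = g).

Definition focal (n : nat) (M : {set {set 'I_n}}) (g : {ffun 'I_n -> nat}) (l : nat)
  : {set {set 'I_n}} :=
  [set A : {set 'I_n} | [exists F : {set 'I_n}, [&& is_basis M F, gsum g F == l & A \subset F]]].

From mathcomp Require Import all_boot all_order.
From mathcomp Require Import zify.
Set Implicit Arguments. Unset Strict Implicit. Unset Printing Implicit Defensive.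

(** Since [g] is an [l]-cover, the bases [F] with [gsum g F = l] are exactly the
    minimum-weight bases of [M], and minimality of [g] guarantees that one exists:
    otherwise lowering some positive [g i] by one would give a smaller [l]-cover.
    No single exchange lowers the weight of a minimum-weight basis [F], so [F]
    contains a maximal independent subset of every sublevel set [{i | g i <= t}].
    For [z] in [F1 :\: F2], comparing [F1] and [F2] on the sublevel set of [g z]
    yields [y] in [F2 :\: F1] with [g y <= g z] and [F1 - z + y] a basis, again of
    minimum weight. So the minimum-weight bases satisfy the basis exchange axiom,
    and the complex they generate is a matroid; its bases are bases of [M], hence
    it has the rank of [M]. *)

Section Matroid.

Variables (n : nat) (M : {set {set 'I_n}}).
Hypothesis matM : is_matroid M.

Lemma indep_subset (A B : {set 'I_n}) : B \in M -> A \subset B -> A \in M.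
Proof. by case: matM => _ hered _; apply: hered. Qed.

Lemma indep_augment (A B : {set 'I_n}) : A \in M -> B \in M -> #|A| < #|B| ->
  exists2 x, x \in B :\: A & x |: A \in M.
Proof. by case: matM => _ _ aug; apply: aug. Qed.

Lemma indep_extend (I K : {set 'I_n}) : I \in M -> K \in M -> #|I| <= #|K| ->
  exists I', [/\ I' \in M, I \subset I', I' \subset I :|: K & #|I'| = #|K|].
Proof.
have [k] := ubnP (#|K| - #|I|); elim: k I => // k IH I ltk MI MK leIK.
case: (ltnP #|I| #|K|) => [ltIK | geIK]; last first.
  by exists I; split; rewrite ?subsetUl //; apply/eqP; rewrite eqn_leq leIK.
have [x /setDP [xK xI] Mx] := indep_augment MI MK ltIK.
have card_xI : #|x |: I| = #|I|.+1 by rewrite cardsU1 xI.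
have [I' [MI' sxI sI'] cardI'] := IH (x |: I) ltac:(lia) Mx MK ltac:(lia).
exists I'; split=> //; first exact: subset_trans (subsetUr _ _) sxI.
by apply: subset_trans sI' _; rewrite -setUA subUset sub1set !inE xK orbT subxx.
Qed.

Lemma basis_indep (F : {set 'I_n}) : is_basis M F -> F \in M.
Proof. by case/andP. Qed.

Lemma card_indep_le_basis (A F : {set 'I_n}) : is_basis M F -> A \in M -> #|A| <= #|F|.
Proof.
move=> /andP [MF /forall_inP maxF] MA; rewrite leqNgt; apply/negP => ltFA.
have [x /setDP [xA xF] MxF] := indep_augment MF MA ltFA.
have /eqP exF := implyP (maxF _ MxF) (subsetUr _ _).
by rewrite -exF setU11 in xF.
Qed.

Lemma card_basis_eq (F1 F2 : {set 'I_n}) : is_basis M F1 -> is_basis M F2 -> #|F1| = #|F2|.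
Proof.
move=> bF1 bF2; apply/eqP; rewrite eqn_leq.
by rewrite (card_indep_le_basis bF2 (basis_indep bF1)) (card_indep_le_basis bF1 (basis_indep bF2)).
Qed.

Lemma basis_of_card (A F : {set 'I_n}) : is_basis M F -> A \in M -> #|F| <= #|A| -> is_basis M A.
Proof.
move=> bF MA leFA; rewrite /is_basis MA; apply/forall_inP => G MG; apply/implyP => sAG.
by rewrite eq_sym eqEcard sAG (leq_trans (card_indep_le_basis bF MG) leFA).
Qed.

Lemma basis_exists : exists F, is_basis M F.
Proof.
have M0 : set0 \in M by case: matM.
have [F MF maxF] := arg_maxnP (fun A : {set 'I_n} => #|A|) M0.
exists F; apply/andP; split=> //; apply/forall_inP => G MG; apply/implyP => sFG.
by rewrite eq_sym eqEcard sFG; apply: maxF.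
Qed.

Lemma basis_swap (F X : {set 'I_n}) x :
  is_basis M F -> x \notin F -> X \in M -> x \in X -> X \subset x |: F ->
  exists2 u, u \in F :\: X & is_basis M (x |: (F :\ u)).
Proof.
move=> bF xF MX xX sXF.
have [I [MI sXI sI] cardI] := indep_extend MX (basis_indep bF) (card_indep_le_basis bF MX).
have bI : is_basis M I by apply: basis_of_card bF MI _; rewrite cardI.
have sIF : I \subset x |: F by apply: subset_trans sI _; rewrite subUset sXF subsetUr.
have : ~~ (x |: F \subset I).
  by apply/negP => /subset_leq_card; rewrite cardsU1 xF cardI ltnn.
case/subsetPn => u; rewrite in_setU1 => /predU1P [-> | uF] uI.
  by rewrite (subsetP sXI x xX) in uI.
exists u; first by rewrite inE uF andbT; apply: contra uI; apply: (subsetP sXI).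
suff -> : x |: (F :\ u) = I by [].
apply/eqP; rewrite eq_sym eqEcard cardI cardsU1 in_setD1 (negbTE xF) andbF.
rewrite (cardsD1 u F) uF leqnn andbT.
apply/subsetP => y yI; move/subsetP/(_ y yI): sIF.
rewrite !inE => /predU1P [-> | ->]; rewrite ?eqxx // andbT orbC.
by apply/orP; left; apply: contraNneq uI => <-.
Qed.

End Matroid.

Lemma gsum_swap n (g : {ffun 'I_n -> nat}) (F : {set 'I_n}) x u :
  x \notin F -> u \in F -> gsum g (x |: (F :\ u)) + g u = gsum g F + g x.
Proof.
move=> xF uF; rewrite /gsum big_setU1 /=; last by rewrite in_setD1 (negbTE xF) andbF.
rewrite (big_setD1 u uF) /=; lia.
Qed.

Definition focal_basis n (M : {set {set 'I_n}}) (g : {ffun 'I_n -> nat}) (l : nat)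
  : pred {set 'I_n} := [pred F | is_basis M F && (gsum g F == l)].

Definition sublevel n (g : {ffun 'I_n -> nat}) (t : nat) : {set 'I_n} := [set i | g i <= t].

Section FocalBases.

Variables (n : nat) (M : {set {set 'I_n}}) (g : {ffun 'I_n -> nat}) (l : nat).
Hypotheses (matM : is_matroid M) (coverMg : is_cover M g l).

Lemma focal_basis_swap_le (F : {set 'I_n}) x u :
  focal_basis M g l F -> x \notin F -> u \in F -> is_basis M (x |: (F :\ u)) ->
  g u <= g x.
Proof.
case/andP => _ /eqP gF xF uF bF'.
by move: (coverMg bF') (gsum_swap g xF uF); lia.
Qed.

Lemma focal_basis_swap (F : {set 'I_n}) x u :
  focal_basis M g l F -> x \notin F -> u \in F -> is_basis M (x |: (F :\ u)) ->
  g x <= g u -> focal_basis M g l (x |: (F :\ u)).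
Proof.
case/andP => _ /eqP gF xF uF bF' gxu; apply/andP; split=> //; apply/eqP.
by move: (coverMg bF') (gsum_swap g xF uF); lia.
Qed.

Lemma card_sublevel_focal_basis t (F J : {set 'I_n}) :
  focal_basis M g l F -> J \in M -> J \subset sublevel g t ->
  #|J| <= #|F :&: sublevel g t|.
Proof.
move=> fF MJ sJ; rewrite leqNgt; apply/negP => ltPJ.
have bF : is_basis M F by case/andP: fF.
set P := F :&: sublevel g t in ltPJ.
have MP : P \in M := indep_subset matM (basis_indep bF) (subsetIl _ _).
have [j /setDP [jJ jP] MjP] := indep_augment matM MP MJ ltPJ.
have jt : g j <= t by have := subsetP sJ j jJ; rewrite inE.
have jF : j \notin F by apply: contra jP => jF; rewrite !inE jF jt.
have [u /setDP [uF ujP] bF'] :=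
  basis_swap matM bF jF MjP (setU11 _ _) (setUS _ (subsetIl _ _)).
have ut : t < g u by move: ujP; rewrite !inE uF ltnNge => /norP [].
by move: (focal_basis_swap_le fF jF uF bF'); rewrite leqNgt (leq_ltn_trans jt ut).
Qed.

Lemma focal_basis_exchange (F1 F2 : {set 'I_n}) z :
  focal_basis M g l F1 -> focal_basis M g l F2 -> z \in F1 :\: F2 ->
  exists2 y, y \in F2 :\: F1 & focal_basis M g l (y |: (F1 :\ z)).
Proof.
move=> fF1 fF2; rewrite inE => /andP [zF2 zF1].
have [bF1 bF2] : is_basis M F1 /\ is_basis M F2 by case/andP: fF1; case/andP: fF2.
set S := sublevel g (g z); set P := F1 :&: S; set Q := F2 :&: S.
have zP : z \in P by rewrite !inE zF1 /=.
have MP : P \in M := indep_subset matM (basis_indep bF1) (subsetIl _ _).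
have MQ : Q \in M := indep_subset matM (basis_indep bF2) (subsetIl _ _).
have MPz : P :\ z \in M := indep_subset matM MP (subsetDl _ _).
have lePQ : #|P| <= #|Q| := card_sublevel_focal_basis fF2 MP (subsetIr _ _).
have ltPQ : #|P :\ z| < #|Q| by move: lePQ; rewrite (cardsD1 z P) zP.
have [y /setDP [yQ yPz] MyPz] := indep_augment matM MPz MQ ltPQ.
have /andP [yF2 yS] : (y \in F2) && (y \in S) by rewrite -in_setI.
have yz : y != z by apply: contraNneq zF2 => <-.
have yF1 : y \notin F1 by apply: contra yPz => yF1; rewrite in_setD1 in_setI yz yF1 yS.
have sPF1 : P :\ z \subset F1 := subset_trans (subsetDl _ _) (subsetIl _ _).
have [u /setDP [uF1 uX] bF1'] := basis_swap matM bF1 yF1 MyPz (setU11 _ _) (setUS _ sPF1).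
have gyz : g y <= g z by move: yS; rewrite inE.
(* Any other [u] lies outside the sublevel set, so the swap would lower the weight. *)
have uz : u = z.
  apply/eqP/contraT => uz.
  have gzu : g z < g u by move: uX; rewrite !inE uz uF1 ltnNge /= => /norP [].
  by move: (focal_basis_swap_le fF1 yF1 uF1 bF1'); rewrite leqNgt (leq_ltn_trans gyz gzu).
exists y; first by rewrite inE yF2 yF1.
by rewrite -uz; apply: focal_basis_swap fF1 yF1 uF1 bF1' _; rewrite uz.
Qed.

End FocalBases.

Lemma cardsD_ltn (T : finType) (A B : {set T}) : #|A| < #|B| -> #|A :\: B| < #|B :\: A|.
Proof. by rewrite -(cardsID B A) -(cardsID A B) setIC ltn_add2l. Qed.

Definition down_closure n (bases : pred {set 'I_n}) : {set {set 'I_n}} :=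
  [set A : {set 'I_n} | [exists F, bases F && (A \subset F)]].

Section DownClosure.

Variables (n : nat) (bases : pred {set 'I_n}).
Hypothesis card_bases : forall F1 F2, bases F1 -> bases F2 -> #|F1| = #|F2|.
Hypothesis bases_exchange : forall F1 F2 z, bases F1 -> bases F2 -> z \in F1 :\: F2 ->
  exists2 y, y \in F2 :\: F1 & bases (y |: (F1 :\ z)).

Lemma down_closure_augment (F1 F2 A C : {set 'I_n}) :
  bases F1 -> bases F2 -> A \subset F1 -> C \subset F2 -> #|A| < #|C| ->
  exists2 x, x \in C :\: A & x |: A \in down_closure bases.
Proof.
move=> + bF2 + sCF2 ltAC.
have [k] := ubnP #|F1 :\: F2|; elim: k F1 => // k IH F1 ltk bF1 sAF1.
case: (boolP (C :&: F1 \subset A)) => [sCF1A | /subsetPn [x]]; last first.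
  rewrite inE => /andP [xC xF1] xA; exists x; first by rewrite inE xA.
  by rewrite inE; apply/existsP; exists F1; rewrite bF1 subUset sub1set xF1.
case: (boolP (F1 :\: F2 \subset A)) => [sF12A | /subsetPn [z zF12 zA]].
  have sCA : C :\: A \subset F2 :\: F1.
    apply/subsetP => x; rewrite !inE => /andP [xA xC]; rewrite (subsetP sCF2) // andbT.
    by apply: contra xA => xF1; apply: (subsetP sCF1A); rewrite inE xC.
  have sFA : F1 :\: F2 \subset A :\: C.
    apply/subsetP => x xF12; rewrite inE (subsetP sF12A) // andbT.
    by move: xF12; rewrite inE => /andP [xF2 _]; apply: contra xF2; apply: (subsetP sCF2).
  have eqD : #|F2 :\: F1| = #|F1 :\: F2| by rewrite !cardsD setIC (card_bases bF1 bF2).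
  have leCA : #|C :\: A| <= #|A :\: C|.
    by apply: leq_trans (subset_leq_card sCA) _; rewrite eqD subset_leq_card.
  by move: leCA; rewrite leqNgt cardsD_ltn.
have [y yF21 bF1'] := bases_exchange bF1 bF2 zF12.
apply: IH bF1' _.
  have sF1' : (y |: (F1 :\ z)) :\: F2 \subset (F1 :\: F2) :\ z.
    apply/subsetP => x; rewrite !inE => /andP [xF2 /predU1P [exy | /andP [-> ->]]].
      by move: yF21; rewrite inE -exy (negbTE xF2) andbF.
    by rewrite xF2.
  rewrite (cardsD1 z (F1 :\: F2)) zF12 ltnS in ltk.
  exact: leq_ltn_trans (subset_leq_card sF1') ltk.
apply/subsetP => a aA; rewrite !inE (subsetP sAF1) // andbT.
by apply/orP; right; apply: contraNneq zA => <-.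
Qed.

Lemma down_closure_matroid : (exists F, bases F) -> is_matroid (down_closure bases).
Proof.
case=> F bF; split.
- by rewrite inE; apply/existsP; exists F; rewrite bF sub0set.
- move=> A B; rewrite !inE => /existsP [F' /andP [bF' sBF']] sAB.
  by apply/existsP; exists F'; rewrite bF' (subset_trans sAB sBF').
- move=> A B; rewrite [A \in _]inE [B \in _]inE.
  move=> /existsP [F1 /andP [bF1 sAF1]] /existsP [F2 /andP [bF2 sBF2]].
  exact: down_closure_augment bF1 bF2 sAF1 sBF2.
Qed.

End DownClosure.

Lemma focal_down_closure n (M : {set {set 'I_n}}) (g : {ffun 'I_n -> nat}) (l : nat) :
  focal M g l = down_closure (focal_basis M g l).
Proof. by apply/setP => A; rewrite !inE; apply: eq_existsb => F; rewrite andbA. Qed.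

Lemma focal_subset n (M : {set {set 'I_n}}) (g : {ffun 'I_n -> nat}) (l : nat) :
  is_matroid M -> focal M g l \subset M.
Proof.
move=> matM; apply/subsetP => A; rewrite inE => /existsP [F /and3P [bF _ sAF]].
exact: (indep_subset matM (basis_indep bF) sAF).
Qed.

Lemma basic_cover_attained n (M : {set {set 'I_n}}) (g : {ffun 'I_n -> nat}) (l : nat) :
  is_matroid M -> is_basic_cover M g l -> exists F, focal_basis M g l F.
Proof.
move=> matM [coverMg min_g]; apply/existsP/contraT => /existsPn nofocal; exfalso.
have gt_l F : is_basis M F -> l < gsum g F.
  move=> bF; rewrite ltn_neqAle (coverMg F bF) andbT eq_sym.
  by apply: contra (nofocal F) => gF; apply/andP.
have [i gi] : exists i, 0 < g i.
  have [B bB] := basis_exists matM.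
  move: (leq_ltn_trans (leq0n l) (gt_l B bB)); rewrite lt0n sum_nat_eq0.
  by case/forall_inPn => i _; rewrite -lt0n; exists i.
pose g' := [ffun j => g j - (j == i)].
have le_g'g j : g' j <= g j by rewrite ffunE leq_subr.
have gsum_g' F : gsum g F <= (gsum g' F).+1.
  rewrite /gsum; case: (boolP (i \in F)) => iF.
    rewrite !(big_setD1 i iF) /= ffunE eqxx subn1 -addSn prednK //.
    by rewrite leq_add2l; apply: leq_sum => j /setD1P [ji _]; rewrite ffunE (negbTE ji) subn0.
  apply: leqW; apply: leq_sum => j jF.
  have ji : (j == i) = false by apply: contraNF iF => /eqP <-.
  by rewrite ffunE ji subn0.
have cover_g' : is_cover M g' l by move=> F bF; move: (gsum_g' F) (gt_l F bF); lia.
have := congr1 (fun h : {ffun 'I_n -> nat} => h i) (min_g g' le_g'g cover_g').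
by rewrite /= ffunE eqxx; lia.
Qed.

Lemma rank_of_maximum n (I : {set {set 'I_n}}) (F : {set 'I_n}) :
  F \in I -> (forall A, A \in I -> #|A| <= #|F|) -> rank I = #|F|.
Proof.
move=> IF maxF; apply/eqP; rewrite eqn_leq (leq_bigmax_cond _ IF) andbT.
exact/bigmax_leqP.
Qed.

Theorem corollary3p6 (n : nat) (M : {set {set 'I_n}}) (g : {ffun 'I_n -> nat}) (l : nat) :
  is_matroid M -> is_basic_cover M g l ->
  [/\ is_matroid (focal M g l), focal M g l \subset M & rank (focal M g l) = rank M].
Proof.
move=> matM basic_g; have [cover_g _] := basic_g.
have [F0 fF0] := basic_cover_attained matM basic_g.
have bF0 : is_basis M F0 by case/andP: fF0.
have focal_M := focal_subset g l matM.
have F0_focal : F0 \in focal M g l.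
  by rewrite focal_down_closure inE; apply/existsP; exists F0; rewrite fF0 subxx.
have card_le_F0 A : A \in M -> #|A| <= #|F0| := card_indep_le_basis matM bF0.
split=> //.
- rewrite focal_down_closure; apply: down_closure_matroid; last by exists F0.
  + by move=> F1 F2 /andP [bF1 _] /andP [bF2 _]; apply: (card_basis_eq matM bF1 bF2).
  + exact: focal_basis_exchange matM cover_g.
rewrite (rank_of_maximum F0_focal) ?(rank_of_maximum (basis_indep bF0)) // => A.
by move/(subsetP focal_M); apply: card_le_F0.
Qed.
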